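(* If $G$ is a prime $\{P_5,\overline{P_5},C_5\}$-free graph, then there is an induced subgraph of $G$ isomorphic to $P_4$ whose two vertices of degree one (in the $P_4$) are simplicial vertices of $G$ and whose two vertices of degree two (in the $P_4$) are antisimplicial vertices of $G$.
   Context: All graphs are finite and simple. $P_n$ is the path on $n$ vertices, $C_n$ the cycle of length $n$, $\overline{G}$ the complement. $G$ is $H$-free if it has no induced subgraph isomorphic to $H$. A vertex $b\notin X$ is mixed on $X$ if it has both a neighbor and a non-neighbor in $X$. A homogeneous set is a set $X\subseteq V(G)$ with $1<|X|<|V(G)|$ such that no vertex outside $X$ is mixed on $X$. $G$ is prime if $|V(G)|\ge4$ and $G$ has no homogeneous set. A vertex $v$ is simplicial if $N(v)$ is a clique, antisimplicial if $V(G)\setminus N(v)$ is a stable set. *)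

From mathcomp Require Import all_boot.
Set Implicit Arguments. Unset Strict Implicit. Unset Printing Implicit Defensive.

Definition simple_graph (T : finType) (e : rel T) : Prop :=
  symmetric e /\ irreflexive e.

Definition path_rel (n : nat) : rel 'I_n :=
  fun i j => (i.+1 == j :> nat) || (j.+1 == i :> nat).

Arguments path_rel n : clear implicits.

Definition cycle_rel (n : nat) : rel 'I_n :=
  fun i j => (i != j) && ((i.+1 %% n == j :> nat) || (j.+1 %% n == i :> nat)).

Arguments cycle_rel n : clear implicits.

Definition compl_rel (U : finType) (h : rel U) : rel U :=
  fun i j => (i != j) && ~~ h i j.

Definition induced_sub (U T : finType) (h : rel U) (e : rel T) : Prop :=
  exists f : U -> T, injective f /\ forall i j, e (f i) (f j) = h i j.

Definition H_free (U T : finType) (h : rel U) (e : rel T) : Prop :=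
  ~ induced_sub h e.

Definition mixed (T : finType) (e : rel T) (X : {set T}) (b : T) : Prop :=
  b \notin X /\ (exists x, x \in X /\ e b x) /\ (exists y, y \in X /\ ~~ e b y).

Definition homogeneous (T : finType) (e : rel T) (X : {set T}) : Prop :=
  1 < #|X| /\ #|X| < #|T| /\ forall b, ~ mixed e X b.

Definition prime_graph (T : finType) (e : rel T) : Prop :=
  4 <= #|T| /\ forall X : {set T}, ~ homogeneous e X.

Definition simplicial (T : finType) (e : rel T) (v : T) : Prop :=
  forall x y, e v x -> e v y -> x != y -> e x y.

Definition antisimplicial (T : finType) (e : rel T) (v : T) : Prop :=
  forall x y, ~~ e v x -> ~~ e v y -> ~~ e x y.

From mathcomp Require Import all_boot.
Set Implicit Arguments. Unset Strict Implicit. Unset Printing Implicit Defensive.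

(* The core, [simplicial_nonneighbour], gives every vertex v
   a simplicial non-neighbour: grow a connected set B from {v}, adding vertices
   mixed on the set Z(B) of vertices anticomplete to B, until Z(B) = {u}; then
   u is simplicial, for otherwise primality and [five_vertex] (no P5, co-P5, C5
   on five vertices) propagate a contradiction along the non-neighbours of u.
   Complementation gives every vertex an antisimplicial neighbour.  The theorem
   takes an antisimplicial k with most simplicial neighbours, a simplicial
   non-neighbour s' of k and an antisimplicial neighbour k' of s'; maximality
   provides a simplicial neighbour s of k missed by k'. *)

Definition twin_free (U : finType) (h : rel U) : Prop :=
  forall i j, h i =1 h j -> i = j.

Lemma induced_of_pattern (U T : finType) (e : rel T) (h : rel U) (f : U -> T) :
  twin_free h -> (forall i j, e (f i) (f j) = h i j) -> induced_sub h e.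
Proof.
move=> tf ef; exists f; split=> // i j fij; apply: tf => k.
by rewrite -!ef fij.
Qed.

Lemma twin_free_of_enum (U : finType) (h : rel U) (s : seq U) :
  (forall i, i \in s) ->
  all (fun i => all (fun j => (i == j) || has (fun k => h i k != h j k) s) s) s ->
  twin_free h.
Proof.
move=> sT /allP H i j hij; have /allP/(_ j (sT j)) := H i (sT i).
by case/orP=> [/eqP // | /hasP[k _]]; rewrite hij eqxx.
Qed.

Definition ord5 : seq 'I_5 :=
  [:: @Ordinal 5 0 isT; @Ordinal 5 1 isT; @Ordinal 5 2 isT;
      @Ordinal 5 3 isT; @Ordinal 5 4 isT].

Lemma mem_ord5 (i : 'I_5) : i \in ord5.
Proof. by case: i => [[|[|[|[|[|?]]]]] ?]. Qed.

Lemma P5_twin_free : twin_free (path_rel 5).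
Proof. by apply: (twin_free_of_enum mem_ord5); vm_compute. Qed.

Lemma coP5_twin_free : twin_free (compl_rel (path_rel 5)).
Proof. by apply: (twin_free_of_enum mem_ord5); vm_compute. Qed.

Lemma C5_twin_free : twin_free (cycle_rel 5).
Proof. by apply: (twin_free_of_enum mem_ord5); vm_compute. Qed.

Lemma path_irr (n : nat) : irreflexive (path_rel n).
Proof. by move=> i; rewrite /path_rel orbb gtn_eqF. Qed.

Lemma compl_sym (T : finType) (e : rel T) :
  symmetric e -> symmetric (compl_rel e).
Proof. by move=> e_sym x y; rewrite /compl_rel eq_sym e_sym. Qed.

Lemma compl_irr (T : finType) (e : rel T) : irreflexive (compl_rel e).
Proof. by move=> x; rewrite /compl_rel eqxx. Qed.

Lemma compl_compl (U : finType) (h : rel U) :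
  irreflexive h -> compl_rel (compl_rel h) =2 h.
Proof.
move=> h_irr i j; rewrite /compl_rel.
by case: (eqVneq i j) => [-> | _] /=; rewrite ?h_irr ?negbK.
Qed.

Lemma free_compl (U T : finType) (e : rel T) (h : rel U) :
  irreflexive e -> H_free (compl_rel h) e -> H_free h (compl_rel e).
Proof.
move=> e_irr free [f [f_inj ef]]; apply: free; exists f; split=> // i j.
rewrite /compl_rel -ef /compl_rel.
case: (eqVneq i j) => [-> | ij] /=; first by rewrite e_irr.
by rewrite (inj_eq f_inj) ij negbK.
Qed.

(* C5 is self-complementary, via i |-> 2 i mod 5. *)
Definition double5 (i : 'I_5) : 'I_5 := Ordinal (ltn_pmod (2 * i) (isT : 0 < 5)).

Lemma C5_self_compl (T : finType) (e : rel T) :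
  H_free (cycle_rel 5) e -> H_free (compl_rel (cycle_rel 5)) e.
Proof.
move=> free [f [_ ef]]; apply: free.
apply: (induced_of_pattern (f := f \o double5) C5_twin_free) => i j /=.
by rewrite ef; case: i j => [[|[|[|[|[|?]]]]] ?] // [[|[|[|[|[|?]]]]] ?] //; vm_compute.
Qed.

Lemma antisimplicial_compl (T : finType) (e : rel T) (v : T) :
  simple_graph e -> antisimplicial e v <-> simplicial (compl_rel e) v.
Proof.
move=> [e_sym e_irr]; split=> [anti x y | simp x y nvx nvy].
  by rewrite /compl_rel => /andP[vx nvx] /andP[vy nvy] xy; rewrite xy anti.
case: (eqVneq x y) => [-> | xy]; first by rewrite e_irr.
case: (eqVneq v x) => [<- // | vx]; case: (eqVneq v y) => [<- | vy].
  by rewrite e_sym.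
by move: (simp x y); rewrite /compl_rel vx vy nvx nvy xy => /(_ isT isT isT) /andP[].
Qed.

(* A graph and its complement have the same homogeneous sets. *)
Lemma compl_prime (T : finType) (e : rel T) :
  prime_graph e -> prime_graph (compl_rel e).
Proof.
move=> [T4 prime]; split=> // X [X1 [XT hom]]; apply: (prime X); do 2 split=> //.
move=> b [bX [[x [xX ebx]] [y [yX neby]]]]; apply: (hom b); split=> //; split.
  by exists y; split=> //; rewrite /compl_rel neby andbT; apply: contraNneq bX => ->.
by exists x; split=> //; rewrite /compl_rel ebx andbF.
Qed.

Definition connected_set (T : finType) (r : rel T) (B : {set T}) : Prop :=
  forall X : {set T}, X \subset B -> X != set0 -> X != B ->
    exists x y, [/\ x \in X, y \in B :\: X & r x y].

Section Connectivity.
Variables (T : finType) (r : rel T).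

Lemma connected_set1 (v : T) : connected_set r [set v].
Proof. by move=> X; rewrite subset1 => /orP[] /eqP -> //; rewrite eqxx. Qed.

Lemma connected_edge_across (B : {set T}) (p : pred T) (x y : T) :
  connected_set r B -> x \in B -> y \in B -> p x -> ~~ p y ->
  exists a b, [/\ a \in B, b \in B, r a b, p a & ~~ p b].
Proof.
move=> cB xB yB px npy; pose X := [set z in B | p z].
have [|||a [b [aX /setDP[bB bX] rab]]] := cB X.
- by apply/subsetP => z; rewrite inE => /andP[].
- by apply/set0Pn; exists x; rewrite inE xB px.
- by apply/eqP => /setP/(_ y); rewrite inE yB (negbTE npy).
move: aX bX; rewrite !inE bB /= => /andP[aB pa] npb.
by exists a, b.
Qed.

Lemma connected_closed (W R : {set T}) (x : T) :
  connected_set r W -> x \in W -> x \in R ->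
  (forall a b, a \in R -> b \in W -> r a b -> b \in R) ->
  {subset W <= R}.
Proof.
move=> cW xW xR clR w wW; apply/negPn/negP => wR.
have [a [b [aW bW rab aR bR]]] := connected_edge_across cW xW wW xR wR.
exact: (negP bR (clR a b aR bW rab)).
Qed.

Hypothesis r_sym : symmetric r.

Lemma connected_extend (B W : {set T}) :
  connected_set r B -> B \subset W ->
  (forall w, w \in W -> w \notin B -> exists2 b, b \in B & r b w) ->
  connected_set r W.
Proof.
move=> cB BW attach X XW Xn0 XnW; have [w wX] := set0Pn _ Xn0.
case: (boolP (B \subset X)) => [BX | /subsetPn[b bB bX]].
  have [v /setDP[vW vX]] : exists v, v \in W :\: X.
    by apply/set0Pn; apply: contra XnW; rewrite setD_eq0 eqEsubset XW.
  have [b bB rbv] := attach v vW (contra (subsetP BX v) vX).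
  by exists b, v; rewrite inE vX vW (subsetP BX).
have cross_from_B a : a \in B -> a \in X ->
    exists x y, [/\ x \in X, y \in W :\: X & r x y].
  move=> aB aX; have [x [y [_ yB rxy xX yX]]] := connected_edge_across cB aB bB aX bX.
  by exists x, y; rewrite inE yX (subsetP BW).
case: (boolP (w \in B)) => wB; first exact: (cross_from_B w).
have [a aB raw] := attach w (subsetP XW w wX) wB.
case: (boolP (a \in X)) => aX; first exact: (cross_from_B a).
by exists w, a; rewrite inE aX (subsetP BW) // r_sym.
Qed.

(* Every x in K lies in a connected part of K closed under edges inside K (a
   component of K), obtained as a minimal such closed part containing x. *)
Lemma closed_connected_part (K : {set T}) (x : T) : x \in K ->
  exists2 H : {set T},
    [/\ H \subset K, x \in H & forall a k, a \in H -> k \in K -> r a k -> k \in H]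
    & connected_set r H.
Proof.
move=> xK.
pose closed (H : {set T}) :=
  [&& H \subset K, x \in H & [forall a in H, forall k in K, r a k ==> (k \in H)]].
have closedP (H : {set T}) : reflect [/\ H \subset K, x \in H
                          & forall a k, a \in H -> k \in K -> r a k -> k \in H] (closed H).
  apply: (iffP and3P) => -[HK xH clH]; split=> //.
    by move=> a k aH kK; move/forall_inP/(_ a aH)/forall_inP/(_ k kK)/implyP: clH.
  by apply/forall_inP => a aH; apply/forall_inP => k kK; apply/implyP; apply: clH.
have cK : closed K by apply/closedP; split.
have [H /closedP[HK xH clH] minH] := arg_minnP (fun H : {set T} => #|H|) cK.
exists H => // X XH Xn0 XnH.
case: (boolP [exists a in X, exists b in H :\: X, r a b]) => [|noedge].
  by move=> /exists_inP[a aX /exists_inP[b bHX rab]]; exists a, b.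
have stay a b : a \in X -> b \in H -> r a b -> b \in X.
  move=> aX bH rab; apply/negPn/negP => bX; apply: (negP noedge).
  by apply/exists_inP; exists a => //; apply/exists_inP; exists b; rewrite // inE bX.
have [w wX] := set0Pn _ Xn0.
have XltH : X \proper H by rewrite properEneq XnH.
case: (boolP (x \in X)) => xX.
  have: closed X.
    apply/closedP; split=> [|//|a k aX kK rak]; first exact: subset_trans XH HK.
    exact: (stay a) (clH a k (subsetP XH a aX) kK rak) rak.
  by move/minH; rewrite leqNgt proper_card.
have: closed (H :\: X).
  apply/closedP; split=> [|| a k /setDP[aH aX] kK rak].
  - exact: subset_trans (subsetDl H X) HK.
  - by rewrite inE xX xH.
  rewrite inE (clH a k aH kK rak) andbT; apply: contra aX => kX.
  by apply: (stay k) => //; rewrite r_sym.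
move/minH; rewrite leqNgt proper_card //; apply/properP; split; first exact: subsetDl.
by exists w; [exact: (subsetP XH) | rewrite inE wX].
Qed.
End Connectivity.

Section PrimeGraph.
Variables (T : finType) (e : rel T).
Hypotheses (e_sym : symmetric e) (e_irr : irreflexive e).

Lemma path4_uniq (a b c d : T) :
  e a b -> e b c -> e c d -> ~~ e a c -> ~~ e b d -> ~~ e a d ->
  uniq [:: a; b; c; d].
Proof.
move=> eab ebc ecd nac nbd nad.
have adj_neq x y : e x y -> x != y by apply: contraTneq => ->; rewrite e_irr.
have split_neq x y z : e x z -> ~~ e y z -> x != y by move=> exz; apply: contraNneq => <-.
have ca : c != a by apply: (split_neq _ _ d).
have da : d != a by apply: (split_neq _ _ c); rewrite // e_sym.
have bd : b != d by apply: (split_neq _ _ a); rewrite // e_sym.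
rewrite /= !inE !negb_or (adj_neq a b) // (adj_neq b c) // (adj_neq c d) //.
by rewrite -!(eq_sym _ a) ca da bd.
Qed.

Hypothesis e_prime : prime_graph e.

Lemma prime_mixed (X : {set T}) :
  1 < #|X| -> #|X| < #|T| -> exists b, mixed e X b.
Proof.
move=> X1 XT.
case: (boolP [exists b, [&& b \notin X, [exists x in X, e b x]
                               & [exists y in X, ~~ e b y]]]).
  case/existsP=> b /and3P[bX /exists_inP[x xX ebx] /exists_inP[y yX neby]].
  by exists b; split=> //; split; [exists x | exists y].
move=> none; case: (e_prime.2 X); do 2 split=> //.
move=> b [bX [[x [xX ebx]] [y [yX neby]]]]; apply: (negP none).
apply/existsP; exists b; rewrite bX /=.
by apply/andP; split; apply/exists_inP; [exists x | exists y].
Qed.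

Lemma prime_no_twins (a b : T) :
  a != b -> ~ (forall c, c != a -> c != b -> e c a = e c b).
Proof.
move=> ab twins; have [||c [cX [[x [xX ecx]] [y [yX necy]]]]] := prime_mixed (X := [set a; b]).
- by rewrite cards2 ab.
- by rewrite cards2 ab; case: e_prime => T4 _; exact: ltnW.
move: cX; rewrite !inE negb_or => /andP[ca cb].
have same z : z \in [set a; b] -> e c z = e c a.
  by rewrite !inE => /orP[] /eqP ->; rewrite ?twins.
by move: necy; rewrite (same y yX) -(same x xX) ecx.
Qed.

(* Otherwise the adjacent simplicial vertices s1, s2 would be twins. *)
Lemma simplicial_nonadjacent (s1 s2 : T) :
  simplicial e s1 -> simplicial e s2 -> ~~ e s1 s2.
Proof.
move=> simp1 simp2; apply/negP => e12.
have s12 : s1 != s2 by apply: contraTneq e12 => ->; rewrite e_irr.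
apply: (prime_no_twins s12) => c c1 c2.
apply/idP/idP => [ec1 | ec2].
  by apply: (simp1 _ _ _ e12 c2); rewrite e_sym.
by apply: (simp2 _ _ _ _ c1); rewrite e_sym.
Qed.

End PrimeGraph.

Lemma antisimplicial_adjacent (T : finType) (e : rel T) (k1 k2 : T) :
  simple_graph e -> prime_graph e -> k1 != k2 ->
  antisimplicial e k1 -> antisimplicial e k2 -> e k1 k2.
Proof.
move=> [e_sym e_irr] e_prime k12 /antisimplicial_compl-anti1 /antisimplicial_compl-anti2.
have := simplicial_nonadjacent (compl_sym e_sym) (compl_irr e) (compl_prime e_prime)
  (anti1 (conj e_sym e_irr)) (anti2 (conj e_sym e_irr)).
by rewrite /compl_rel k12 negbK.
Qed.

Definition five (T : finType) (a b c d x : T) (i : 'I_5) : T :=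
  nth a [:: a; b; c; d; x] i.

(* Checks the 25 adjacencies of [five ...] against a concrete pattern on 'I_5:
   each adjacency or non-adjacency must be a hypothesis, possibly up to
   symmetry, or a loop. *)
Ltac check_pattern e_sym e_irr :=
  move=> [[|[|[|[|[|?]]]]] ?] // [[|[|[|[|[|?]]]]] ?] //=;
  match goal with |- _ = ?r =>
    let E := fresh in case E: r; vm_compute in E; try discriminate E end;
  first [ by rewrite e_irr | done | by apply/negbTE
        | by rewrite e_sym | by rewrite e_sym; apply/negbTE ].

Definition nonneighbours (T : finType) (e : rel T) (B : {set T}) : {set T} :=
  [set z | (z \notin B) && [forall b in B, ~~ e b z]].

Section PrimeFree.
Variables (T : finType) (e : rel T).
Hypotheses (e_sym : symmetric e) (e_irr : irreflexive e).
Hypotheses (P5_free : H_free (path_rel 5) e)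
           (coP5_free : H_free (compl_rel (path_rel 5)) e)
           (C5_free : H_free (cycle_rel 5) e).

(* If y - h1 - u - h2 is an induced path and w sees y but not u, then w sees
   h1 but not h2: otherwise w y h1 u h2 induce a P5, a C5 or a co-P5. *)
Lemma five_vertex (w y h1 u h2 : T) :
  e y h1 -> e h1 u -> e u h2 -> ~~ e y u -> ~~ e y h2 -> ~~ e h1 h2 ->
  e w y -> ~~ e w u -> e w h1 && ~~ e w h2.
Proof.
move=> Eyh1 Eh1u Euh2 Nyu Nyh2 Nh1h2 Ewy Nwu.
case Ewh1: (e w h1); case Ewh2: (e w h2) => //=; exfalso.
- apply: coP5_free; apply: (induced_of_pattern (f := five w u y h2 h1) coP5_twin_free).
  by check_pattern e_sym e_irr.
- apply: C5_free; apply: (induced_of_pattern (f := five w y h1 u h2) C5_twin_free).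
  by check_pattern e_sym e_irr.
- apply: P5_free; apply: (induced_of_pattern (f := five w y h1 u h2) P5_twin_free).
  by check_pattern e_sym e_irr.
Qed.

Hypothesis e_prime : prime_graph e.

Lemma propagation (u h1 h2 b : T) (W : {set T}) :
  e u h1 -> e u h2 -> ~~ e h1 h2 -> connected_set e W ->
  (forall w, w \in W -> ~~ e u w) -> b \in W -> e b h1 -> ~~ e b h2 ->
  forall w, w \in W -> ~~ e w h2.
Proof.
move=> euh1 euh2 nh12 cW Wu bW ebh1 nebh2.
pose W1 := [set w in W | e w h1 && ~~ e w h2].
have bW1 : b \in W1 by rewrite inE bW ebh1.
suff W_W1 : {subset W <= W1} by move=> w /W_W1; rewrite inE => /and3P[].
apply: (connected_closed cW bW bW1) => a c; rewrite !inE => /and3P[aW eah1 neah2] cW' eac.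
by rewrite cW' (five_vertex (y := a) (u := u)) //; rewrite e_sym ?Wu.
Qed.

(* A non-edge x1 x2 in N(u) lies in an anticonnected part H of N(u); by
   primality a vertex b is mixed on H, and b is a non-neighbour of u seeing
   h1 and missing h2 for some non-edge h1 h2 of H. *)
Lemma mixed_anticomponent (u x1 x2 : T) :
  e u x1 -> e u x2 -> x1 != x2 -> ~~ e x1 x2 ->
  exists b h1 h2,
    [/\ b != u, ~~ e u b, [/\ e u h1, e u h2 & ~~ e h1 h2] & e b h1 && ~~ e b h2].
Proof.
move=> eux1 eux2 x12 nx12; pose K := [set k | e u k].
have x1K : x1 \in K by rewrite inE.
have [H [HK x1H clH] cH] := closed_connected_part (compl_sym e_sym) x1K.
have Hu h : h \in H -> e u h by move=> /(subsetP HK); rewrite inE.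
have x2H : x2 \in H by apply: (clH x1); rewrite ?inE // /compl_rel x12.
have uH : u \notin H by apply/negP => /Hu; rewrite e_irr.
have [||b [bH [[p [pH ebp]] [q [qH nebq]]]]] := @prime_mixed _ _ e_prime H.
- by apply/card_gt1P; exists x1, x2.
- by rewrite -cardsT proper_card // properT; apply: contraNneq uH => ->.
have bu : b != u by apply: contraNneq nebq => ->; exact: Hu.
have qb : q != b by apply: contraNneq bH => <-.
have nub : ~~ e u b.
  by apply: contra bH => eub; apply: (clH q); rewrite ?inE // /compl_rel e_sym nebq qb.
have [h1 [h2 [h1H h2H /andP[_ nh12] ebh1 nebh2]]] := connected_edge_across cH pH qH ebp nebq.
by exists b, h1, h2; split; rewrite ?ebh1 //; split; rewrite ?Hu.
Qed.

(* If B is connected and u is the only vertex anticomplete to B, then u is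
   simplicial: the non-neighbours of u other than u form a connected set
   containing B, along which [propagation] leads to a contradiction. *)
Lemma far_vertex_simplicial (B : {set T}) (u : T) :
  connected_set e B -> nonneighbours e B = [set u] -> simplicial e u.
Proof.
move=> cB Zu x1 x2 eux1 eux2 x12; apply/negPn/negP => nx12.
have [b [h1 [h2 [bu nub [euh1 euh2 nh12] /andP[ebh1 nebh2]]]]] :=
  mixed_anticomponent eux1 eux2 x12 nx12.
have attach w : w != u -> w \notin B -> exists2 c, c \in B & e c w.
  move=> wu wB; have : w \notin nonneighbours e B by rewrite Zu inE.
  by rewrite inE wB => /forall_inPn[c Bc]; rewrite negbK; exists c.
have : u \in nonneighbours e B by rewrite Zu set11.
rewrite inE => /andP[uB /forall_inP Bu].
pose W := [set w | (w != u) && ~~ e u w].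
have BW : B \subset W.
  by apply/subsetP => w wB; rewrite inE e_sym Bu // andbT; apply: contraNneq uB => <-.
have cW : connected_set e W.
  by apply: (connected_extend e_sym cB BW) => w; rewrite inE => /andP[wu _]; exact: attach.
have Wu w : w \in W -> ~~ e u w by rewrite inE => /andP[].
have bW : b \in W by rewrite inE bu nub.
have h2u : h2 != u by apply: contraTneq euh2 => ->; rewrite e_irr.
have h2B : h2 \notin B by apply: contraL euh2 => /Bu; rewrite e_sym.
have [c Bc ech2] := attach h2 h2u h2B.
have := propagation euh1 euh2 nh12 cW Wu bW ebh1 nebh2 (subsetP BW c Bc).
by rewrite ech2.
Qed.

Lemma nonneighbours_setU1 (B : {set T}) (x : T) :
  nonneighbours e (x |: B) = [set z in nonneighbours e B | (z != x) && ~~ e x z].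
Proof.
apply/setP => z; rewrite !inE negb_or.
have -> : [forall b in x |: B, ~~ e b z] = ~~ e x z && [forall b in B, ~~ e b z].
  apply/forall_inP/andP => [far | [nxz /forall_inP far] b].
    split; first by apply: far; rewrite setU11.
    by apply/forall_inP => b bB; apply: far; rewrite inE bB orbT.
  by rewrite !inE => /orP[/eqP -> // | /far].
by case: (z == x); case: (z \in B); case: (e x z); case: [forall b in B, ~~ e b z].
Qed.

Lemma growth_vertex (B : {set T}) :
  B != set0 -> 1 < #|nonneighbours e B| ->
  exists x, [/\ x \notin B, x \notin nonneighbours e B & mixed e (nonneighbours e B) x].
Proof.
move=> Bn0 Z2; have [b bB] := set0Pn _ Bn0.
have bZ : b \notin nonneighbours e B by rewrite inE bB.
have [|x mix] := prime_mixed e_prime Z2.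
  by rewrite -cardsT proper_card // properT; apply: contraNneq bZ => ->; rewrite inE.
have [xZ [[z [zZ exz]] _]] := mix; exists x; split=> //.
by apply: contraL exz => xB; move: zZ; rewrite inE => /andP[_ /forall_inP]; apply.
Qed.

Lemma simplicial_in_nonneighbours (n : nat) (B : {set T}) :
  #|nonneighbours e B| <= n -> B != set0 -> connected_set e B ->
  nonneighbours e B != set0 -> exists2 s, s \in nonneighbours e B & simplicial e s.
Proof.
elim: n B => [|n IH] B; first by rewrite leqn0 cards_eq0 => /eqP -> _ _; rewrite eqxx.
move=> Zn Bn0 cB Zn0; have [Z1 | Z2] := leqP #|nonneighbours e B| 1.
  have [u Zu] : exists u, nonneighbours e B = [set u].
    by apply/cards1P; rewrite eqn_leq Z1 lt0n cards_eq0.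
  by exists u; [rewrite Zu set11 | exact: far_vertex_simplicial cB Zu].
have [x [xB xZ [_ [[z1 [z1Z exz1]] [z2 [z2Z nexz2]]]]]] := growth_vertex Bn0 Z2.
have Z'Z : nonneighbours e (x |: B) \subset nonneighbours e B.
  by apply/subsetP => z; rewrite nonneighbours_setU1 inE => /andP[].
have [||||s sZ' simp] := IH (x |: B).
- rewrite -ltnS (leq_trans _ Zn) // proper_card // properEneq Z'Z andbT.
  by apply: contraTneq z1Z => <-; rewrite nonneighbours_setU1 inE exz1 !andbF.
- by apply/set0Pn; exists x; rewrite setU11.
- apply: (connected_extend e_sym cB (subsetUr _ _)) => w.
  rewrite !inE => /orP[/eqP -> _ | -> //].
  by move: xZ; rewrite inE xB => /forall_inPn[b bB]; rewrite negbK; exists b.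
- apply/set0Pn; exists z2; rewrite nonneighbours_setU1 inE z2Z nexz2 andbT.
  by apply: contraNneq xZ => <-.
by exists s; first exact: (subsetP Z'Z).
Qed.

(* Every vertex v has a simplicial non-neighbour: a vertex v mixed on
   V \ {v} yields Z({v}) != set0, and {v} is connected. *)
Lemma simplicial_nonneighbour (v : T) :
  exists s, [/\ s != v, ~~ e v s & simplicial e s].
Proof.
have card_T : #|T| = #|[set: T] :\ v|.+1 by rewrite -cardsT (cardsD1 v) in_setT.
have [||b [bX [_ [y [yX nby]]]]] := @prime_mixed _ _ e_prime ([set: T] :\ v).
- by move: e_prime.1; rewrite card_T ltnS; exact: ltnW.
- by rewrite card_T.
move: bX yX; rewrite !inE !andbT negbK => /eqP bv yv; subst b.
have yZ : y \in nonneighbours e [set v].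
  by rewrite inE in_set1 yv; apply/forall_inP => c /set1P ->.
have vn0 : [set v] != set0 by apply/set0Pn; exists v; rewrite set11.
have Zn0 : nonneighbours e [set v] != set0 by apply/set0Pn; exists y.
have [s sZ simp] := simplicial_in_nonneighbours (leqnn _) vn0 (@connected_set1 _ e v) Zn0.
move: sZ; rewrite inE in_set1 => /andP[sv /forall_inP Zs].
by exists s; split=> //; apply: Zs; rewrite set11.
Qed.
End PrimeFree.

(* Dually, every vertex has an antisimplicial neighbour: apply
   [simplicial_nonneighbour] to the complement, which is again prime and
   {P5, co-P5, C5}-free. *)
Lemma antisimplicial_neighbour (T : finType) (e : rel T) (v : T) :
  simple_graph e -> prime_graph e ->
  H_free (path_rel 5) e -> H_free (compl_rel (path_rel 5)) e -> H_free (cycle_rel 5) e ->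
  exists k, e v k /\ antisimplicial e k.
Proof.
move=> sg e_prime P5_free coP5_free C5_free; have [e_sym e_irr] := sg.
have coP5_free' : H_free (compl_rel (compl_rel (path_rel 5))) e.
  move=> [f [f_inj ef]]; apply: P5_free; exists f; split=> // i j.
  by rewrite ef compl_compl //; exact: path_irr.
have [s [sv nvs simp]] := simplicial_nonneighbour (compl_sym e_sym) (compl_irr e)
  (free_compl e_irr coP5_free) (free_compl e_irr coP5_free')
  (free_compl e_irr (C5_self_compl C5_free)) (compl_prime e_prime) v.
exists s; split; last exact/(antisimplicial_compl s sg).
by move: nvs; rewrite /compl_rel eq_sym sv negbK.
Qed.

(* Boolean versions of (anti)simplicity, used to count and maximise. *)
Definition simplicialb (T : finType) (e : rel T) (v : T) : bool :=
  [forall x, forall y, e v x ==> e v y ==> (x != y) ==> e x y].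

Definition antisimplicialb (T : finType) (e : rel T) (v : T) : bool :=
  [forall x, forall y, ~~ e v x ==> ~~ e v y ==> ~~ e x y].

Lemma simplicialP (T : finType) (e : rel T) (v : T) :
  reflect (simplicial e v) (simplicialb e v).
Proof.
apply: (iffP forallP) => [simp x y | simp x].
  by move/forallP/(_ y): (simp x) => /implyP impl /impl/implyP impl' /impl'/implyP.
by apply/forallP => y; do 3!apply/implyP => ?; apply: simp.
Qed.

Lemma antisimplicialP (T : finType) (e : rel T) (v : T) :
  reflect (antisimplicial e v) (antisimplicialb e v).
Proof.
apply: (iffP forallP) => [anti x y | anti x].
  by move/forallP/(_ y): (anti x) => /implyP impl /impl/implyP.
by apply/forallP => y; do 2!apply/implyP => ?; apply: anti.
Qed.

Theorem lemma3p6 (T : finType) (e : rel T) :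
  simple_graph e ->
  prime_graph e ->
  H_free (path_rel 5) e ->
  H_free (compl_rel (path_rel 5)) e ->
  H_free (cycle_rel 5) e ->
  exists a b c d : T,
    [/\ uniq [:: a; b; c; d],
        [/\ e a b, e b c & e c d],
        [/\ ~~ e a c, ~~ e b d & ~~ e a d],
        simplicial e a /\ simplicial e d &
        antisimplicial e b /\ antisimplicial e c].
Proof.
move=> sg e_prime P5_free coP5_free C5_free; have [e_sym e_irr] := sg.
have simp_nonnb := simplicial_nonneighbour e_sym e_irr P5_free coP5_free C5_free e_prime.
have anti_nb := antisimplicial_neighbour _ sg e_prime P5_free coP5_free C5_free.
have /card_gt0P[v _] : 0 < #|T| by case: e_prime => T4 _; exact: leq_trans T4.
have [k0 [_ /antisimplicialP anti_k0]] := anti_nb v.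
(* k: an antisimplicial vertex with the most simplicial neighbours *)
pose S k := [set s | simplicialb e s && e k s].
have [k /antisimplicialP anti_k max_k] := arg_maxnP (fun k => #|S k|) anti_k0.
have [s' [_ nks' simp_s']] := simp_nonnb k.
have [k' [es'k' anti_k']] := anti_nb s'.
have kk' : k != k' by apply: contraNneq nks' => ->; rewrite e_sym.
have [s sSk sNSk'] : exists2 s, s \in S k & s \notin S k'.
  apply/subsetPn; apply: contraL (max_k k' (introT (antisimplicialP _ _) anti_k')) => sub.
  rewrite -ltnNge proper_card // properEneq sub andbT; apply/eqP => /setP/(_ s').
  rewrite !inE (negbTE nks') e_sym es'k' andbF andbT => /esym/negbT/negP.
  by apply; exact/simplicialP.
move: sSk sNSk'; rewrite !inE => /andP[simp_s eks]; rewrite simp_s /= => nk's.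
move/simplicialP: simp_s => simp_s.
have ekk' := antisimplicial_adjacent sg e_prime kk' anti_k anti_k'.
have nss' := simplicial_nonadjacent e_sym e_irr e_prime simp_s simp_s'.
have esk : e s k by rewrite e_sym.
have nsk' : ~~ e s k' by rewrite e_sym.
have ek's' : e k' s' by rewrite e_sym.
by exists s, k, k', s'; split=> //; exact: path4_uniq.
Qed.
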